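(* Let $(X,Y,R)$ be a random triple with $X\in\mathbb{R}^d$, $Y\in\{0,1\}$, $R\in\{0,1\}$, $P(Y=y,R=r)>0$ for all $y,r$, and with strictly positive conditional Lebesgue densities $p(x\mid Y=y,R=r)$; write $p(x,y\mid R=r)=p(x\mid Y=y,R=r)P(Y=y\mid R=r)$, $p(x\mid R=r)$ for the density of $X$ given $R=r$, and $\eta_1(x)=P(Y=1\mid X=x,R=1)$. Let $T:\mathbb{R}^d\to\mathbb{R}^k$ be measurable, $t=T(x)$, $T=T(X)$, and for $\theta=(\alpha_0,\alpha_1,\beta_0,\beta_1)$ let $$q_\theta(x)=e^{\alpha_1+\beta_1^\top t}p(x,1\mid R=1)+e^{\alpha_0+\beta_0^\top t}p(x,0\mid R=1),\qquad \mathbf{R}(\theta)=\mathrm{KL}\big(p(\cdot\mid R=0);q_\theta\big).$$ Then the problem $$\min_\theta \mathbf{R}(\theta)\quad\text{subject to}\quad \int q_\theta(x)\,dx=1$$ is equivalent to the problem $$\min_\theta \mathbb{E}\big[-\log\{e^{\alpha_1+\beta_1^\top T}\eta_1(X)+e^{\alpha_0+\beta_0^\top T}(1-\eta_1(X))\}\bigm| R=0\big]$$ $$\text{subject to}\quad \mathbb{E}\big[e^{\alpha_1+\beta_1^\top T}\eta_1(X)+e^{\alpha_0+\beta_0^\top T}(1-\eta_1(X))\bigm| R=1\big]=1.$$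
   Context: $\mathrm{KL}(p;q)=\int p(x)\log\{p(x)/q(x)\}\,dx$ is the Kullback–Leibler divergence. $R=1$ indicates that $Y$ is observed and $R=0$ that it is missing. *)

From HB Require Import structures.
From mathcomp Require Import all_boot all_order all_algebra.
From mathcomp Require Import all_classical all_reals all_analysis.

Set Implicit Arguments.
Unset Strict Implicit.
Unset Printing Implicit Defensive.

Import Order.TTheory GRing.Theory Num.Theory.
Local Open Scope ring_scope.
Local Open Scope classical_set_scope.

(* The sample space R^d is modelled as [d.-tuple R], equipped with the
   library's product (= Borel) sigma-algebra on tuples. *)

(* Lebesgue measure on R^d, characterised (uniquely, on the Borel sets)
   by the volume of closed boxes. *)
Definition is_lebesgue_measure (R : realType) (d : nat)
  (mu : {measure set (d.-tuple R) -> \bar R}) : Prop :=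
  forall a b : d.-tuple R, (forall i, tnth a i <= tnth b i) ->
    mu [set x | forall i, tnth a i <= tnth x i <= tnth b i] =
    (\prod_(i < d) (tnth b i - tnth a i))%:E.

Definition dotk (R : realType) (k : nat) (b t : k.-tuple R) : R :=
  \sum_(i < k) tnth b i * tnth t i.

Record param (R : realType) (k : nat) := Param {
  alpha0 : R; alpha1 : R; beta0 : k.-tuple R; beta1 : k.-tuple R }.

(* Joint law of (X, Y, R): pi y r = P(Y = y, R = r) and
   f y r = conditional Lebesgue density p(x | Y = y, R = r).
   Booleans encode {0,1}: true = 1, false = 0. *)

Definition pXY (R : realType) (T : Type) (pi : bool -> bool -> R)
  (f : bool -> bool -> T -> R) (y r : bool) (x : T) : R :=
  f y r x * (pi y r / (pi false r + pi true r)).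

Definition pX (R : realType) (T : Type) (pi : bool -> bool -> R)
  (f : bool -> bool -> T -> R) (r : bool) (x : T) : R :=
  pXY pi f true r x + pXY pi f false r x.

Definition eta1 (R : realType) (T : Type) (pi : bool -> bool -> R)
  (f : bool -> bool -> T -> R) (x : T) : R :=
  pXY pi f true true x / pX pi f true x.

Definition KL (R : realType) (d : nat) (mu : {measure set (d.-tuple R) -> \bar R})
  (p q : d.-tuple R -> R) : \bar R :=
  (\int[mu]_x (p x * ln (p x / q x))%:E)%E.

Definition condE (R : realType) (d : nat) (mu : {measure set (d.-tuple R) -> \bar R})
  (pi : bool -> bool -> R) (f : bool -> bool -> d.-tuple R -> R) (r : bool)
  (h : d.-tuple R -> R) : \bar R :=
  (\int[mu]_x (h x * pX pi f r x)%:E)%E.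

Definition wt (R : realType) (k : nat) (th : param R k) (y : bool) (t : k.-tuple R) : R :=
  if y then expR (alpha1 th + dotk (beta1 th) t)
  else expR (alpha0 th + dotk (beta0 th) t).

Definition qtheta (R : realType) (d k : nat) (pi : bool -> bool -> R)
  (f : bool -> bool -> d.-tuple R -> R) (T : d.-tuple R -> k.-tuple R)
  (th : param R k) (x : d.-tuple R) : R :=
  wt th true (T x) * pXY pi f true true x + wt th false (T x) * pXY pi f false true x.

Definition gtheta (R : realType) (d k : nat) (pi : bool -> bool -> R)
  (f : bool -> bool -> d.-tuple R -> R) (T : d.-tuple R -> k.-tuple R)
  (th : param R k) (x : d.-tuple R) : R :=
  wt th true (T x) * eta1 pi f x + wt th false (T x) * (1 - eta1 pi f x).

Definition risk1 (R : realType) (d k : nat) (mu : {measure set (d.-tuple R) -> \bar R})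
  (pi : bool -> bool -> R) (f : bool -> bool -> d.-tuple R -> R)
  (T : d.-tuple R -> k.-tuple R) (th : param R k) : \bar R :=
  @KL R d mu (pX pi f false) (qtheta pi f T th).
Definition feasible1 (R : realType) (d k : nat) (mu : {measure set (d.-tuple R) -> \bar R})
  (pi : bool -> bool -> R) (f : bool -> bool -> d.-tuple R -> R)
  (T : d.-tuple R -> k.-tuple R) (th : param R k) : Prop :=
  (\int[mu]_x (qtheta pi f T th x)%:E)%E = 1%:E.

Definition risk2 (R : realType) (d k : nat) (mu : {measure set (d.-tuple R) -> \bar R})
  (pi : bool -> bool -> R) (f : bool -> bool -> d.-tuple R -> R)
  (T : d.-tuple R -> k.-tuple R) (th : param R k) : \bar R :=
  @condE R d mu pi f false (fun x => - ln (gtheta pi f T th x)).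
Definition feasible2 (R : realType) (d k : nat) (mu : {measure set (d.-tuple R) -> \bar R})
  (pi : bool -> bool -> R) (f : bool -> bool -> d.-tuple R -> R)
  (T : d.-tuple R -> k.-tuple R) (th : param R k) : Prop :=
  @condE R d mu pi f true (gtheta pi f T th) = 1%:E.

Definition is_minimizer (R : realType) (k : nat) (J : param R k -> \bar R)
  (C : param R k -> Prop) (th : param R k) : Prop :=
  C th /\ forall th' : param R k, C th' -> (J th <= J th')%E.

From mathcomp Require Import all_boot all_order all_algebra.
From mathcomp Require Import all_classical all_reals all_analysis.
From mathcomp Require Import measurable_realfun ring lra.

(* Write p_r for p(. | R = r). Pointwise g_theta p_1 = q_theta, so the two
   constraints are the same integral, and
     KL(p_0; q_theta) = KL(p_0; p_1) + E[- log g_theta(X) | R = 0].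
   The constant KL(p_0; p_1) is finite: by Gibbs' pointwise inequality
   p log (p / q) >= p - q its integrand is bounded below by the integrable
   - p_1, so it is integrable. Hence on the common feasible set the two
   objectives differ by a finite constant and have the same minimisers.
   Splitting the integral needs care, as E[- log g_theta(X) | R = 0] may be
   infinite: the integral is additive as soon as one summand is integrable. *)

Set Implicit Arguments.
Unset Strict Implicit.
Unset Printing Implicit Defensive.

Import Order.TTheory GRing.Theory Num.Theory.
Local Open Scope ring_scope.

(* x, y and u, v stand for the integrals of the positive and negative parts
   of a + b and of b, and p, n for those of an integrable a. *)
Lemma sube_decomp_pinfty (R : realType) (x y u v : \bar R) (p n : R) :
  (0 <= x)%E -> (0 <= y)%E -> (x <= p%:E + u)%E -> (y <= n%:E + v)%E ->
  (u <= x + n%:E)%E -> (v <= y + p%:E)%E -> u = +oo%E \/ v = +oo%E ->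
  (x - y = (p - n)%:E + (u - v))%E.
Proof.
move: x y u v => [x| |] [y| |] [u| |] [v| |] //= _ _.
all: by move=> ? ? ? ? [].
Qed.

Section integral_EFin_add.
Local Open Scope ereal_scope.
Context d (T : measurableType d) (R : realType).
Variables (mu : {measure set T -> \bar R}) (D : set T).
Hypothesis mD : measurable D.
Implicit Types f g h : T -> R.

Let Ipos (h : T -> R) := \int[mu]_(x in D) (h^\+ x)%:E.

Let EFin_funrpos_ge0 h x : D x -> 0 <= (h^\+ x)%:E.
Proof. by move=> _; rewrite lee_fin funrpos_ge0. Qed.

Let Ipos_ge0 h : 0 <= Ipos h.
Proof. by apply: integral_ge0; exact: EFin_funrpos_ge0. Qed.

Let mIpos h : measurable_fun D h -> measurable_fun D (EFin \o h^\+%R).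
Proof. by move=> mh; apply/measurable_EFinP; exact: measurable_funrpos. Qed.

Let integral_Ipos h : \int[mu]_(x in D) (h x)%:E = Ipos h - Ipos (\- h)%R.
Proof. by rewrite integralE funerpos funerneg /Ipos funrposN. Qed.

Let IposD f g : measurable_fun D f -> measurable_fun D g ->
  \int[mu]_(x in D) (f^\+ x + g^\+ x)%:E = Ipos f + Ipos g.
Proof.
move=> mf mg; under eq_integral do rewrite EFinD.
by rewrite ge0_integralD //;
  [exact: EFin_funrpos_ge0|exact: mIpos|exact: EFin_funrpos_ge0|exact: mIpos].
Qed.

Let Ipos_le_add f g h : measurable_fun D f -> measurable_fun D g ->
  (forall x, h x = f x + g x)%R -> Ipos h <= Ipos f + Ipos g.
Proof.
move=> mf mg /funext ->; rewrite -IposD //; apply: ge0_le_integral => //.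
- exact: EFin_funrpos_ge0.
- by apply: mIpos; exact: measurable_funD.
- by apply/measurable_EFinP; apply: measurable_funD; exact: measurable_funrpos.
move=> x _; rewrite lee_fin /funrpos /= ge_max.
by rewrite lerD ?le_max ?lexx // addr_ge0 // le_max lexx orbT.
Qed.

Lemma integrable_EFin_funrneg_lty (h : T -> R) : measurable_fun D h ->
  \int[mu]_(x in D) (h^\- x)%:E < +oo -> \int[mu]_(x in D) (h x)%:E < +oo ->
  mu.-integrable D (EFin \o h).
Proof.
rewrite -funrposN => mh neg_lty h_lty; apply/integrableP.
split; first exact/measurable_EFinP.
have neg_fin : Ipos (\- h)%R \is a fin_num by rewrite ge0_fin_numE.
have pos_lty : Ipos h < +oo.
  by rewrite -(subeK (Ipos h) neg_fin) -integral_Ipos lte_add_pinfty.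
suff -> : \int[mu]_(x in D) `|(EFin \o h) x| = Ipos h + Ipos (\- h)%R.
  exact: lte_add_pinfty.
rewrite -IposD //; last exact: measurable_funN.
apply: eq_integral => x _; rewrite funrposN.
by rewrite -[RHS]/(((h^\+ + h^\-)%R x)%:E) funrposDneg.
Qed.

Lemma integralD_EFin_integrable_l (a b : T -> R) :
  mu.-integrable D (EFin \o a) -> measurable_fun D b ->
  \int[mu]_(x in D) (a x + b x)%:E =
  \int[mu]_(x in D) (a x)%:E + \int[mu]_(x in D) (b x)%:E.
Proof.
move=> ia mb; have [ib|nib] := pselect (mu.-integrable D (EFin \o b)).
  by under eq_integral do rewrite EFinD; exact: integralD_EFin.
have ma : measurable_fun D a by exact/measurable_EFinP/(measurable_int _ ia).
have b_infty : Ipos b = +oo \/ Ipos (\- b)%R = +oo.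
  have [|pos_fin] := eqVneq (Ipos b) +oo; first by left.
  have [|neg_fin] := eqVneq (Ipos (\- b)%R) +oo; first by right.
  exfalso; apply: nib; apply: integrable_EFin_funrneg_lty => //.
    by rewrite -funrposN ltey.
  by rewrite integral_Ipos ltey_eq fin_numB !ge0_fin_numE ?ltey ?pos_fin
             ?neg_fin.
have Pa_fin : Ipos a \is a fin_num.
  by have := integrable_pos_fin_num mD ia; rewrite funerpos.
have Na_fin : Ipos (\- a)%R \is a fin_num.
  by have := integrable_neg_fin_num mD ia; rewrite funerneg /Ipos funrposN.
rewrite !integral_Ipos -(fineK Pa_fin) -(fineK Na_fin).
rewrite -EFinB; apply: sube_decomp_pinfty; rewrite ?fineK //.
all: apply: Ipos_le_add => [| |x /=]; last (by ring).
all: by repeat apply: measurable_funN; try apply: measurable_funD.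
Qed.

End integral_EFin_add.

Lemma mul_ln_div_ge_sub (R : realType) (p q : R) :
  0 < p -> 0 < q -> p - q <= p * ln (p / q).
Proof.
move=> p_gt0 q_gt0; have qp_gt0 : 0 < q / p by rewrite divr_gt0.
have := expR_ge1Dx (ln (q / p)); rewrite lnK ?posrE // => ln_le.
have qpK : q / p * p = q by rewrite divfK // gt_eqF.
rewrite -[p / q]invf_div lnV ?posrE //; nra.
Qed.

Section KL_integrand.
Local Open Scope ereal_scope.
Context d (T : measurableType d) (R : realType).
Variables (mu : {measure set T -> \bar R}) (p q : T -> R).
Hypotheses (mp : measurable_fun setT p) (mq : measurable_fun setT q).
Hypotheses (p_gt0 : forall x, (0 < p x)%R) (q_gt0 : forall x, (0 < q x)%R).

Lemma measurable_KL_integrand :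
  measurable_fun setT (fun x => p x * ln (p x / q x))%R.
Proof.
rewrite (_ : (fun x => _) = (fun x => p x * (ln (p x) - ln (q x)))%R).
  apply: measurable_funM => //; apply: measurable_funB;
  by apply: measurableT_comp => //; exact: measurable_ln.
by apply/funext => x; rewrite ln_div ?posrE.
Qed.

Lemma integrable_KL_integrand :
  \int[mu]_x (q x)%:E < +oo -> \int[mu]_x (p x * ln (p x / q x))%:E < +oo ->
  mu.-integrable setT (EFin \o (fun x => p x * ln (p x / q x))%R).
Proof.
move=> q_lty KL_lty; apply: integrable_EFin_funrneg_lty => //.
  exact: measurable_KL_integrand.
apply: le_lt_trans q_lty; apply: ge0_le_integral => //.
- by move=> x _; rewrite lee_fin funrneg_ge0.
- apply/measurable_EFinP; apply: measurable_funrneg.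
  exact: measurable_KL_integrand.
- exact/measurable_EFinP.
move=> x _; rewrite lee_fin /funrneg ge_max (ltW (q_gt0 x)) andbT lerNl.
apply: (le_trans _ (mul_ln_div_ge_sub (p_gt0 x) (q_gt0 x))).
by rewrite lerDr ltW.
Qed.

End KL_integrand.

Lemma KL_factor (R : realType) (d : nat)
    (mu : {measure set (d.-tuple R) -> \bar R}) (p r q g : d.-tuple R -> R) :
  measurable_fun setT p -> measurable_fun setT r -> measurable_fun setT q ->
  (forall x, 0 < p x) -> (forall x, 0 < r x) -> (forall x, 0 < q x) ->
  (forall x, g x * r x = q x) ->
  mu.-integrable setT (EFin \o (fun x => p x * ln (p x / r x))) ->
  KL mu p q = (KL mu p r + \int[mu]_x (- ln (g x) * p x)%:E)%E.
Proof.
move=> mp mr mq p_gt0 r_gt0 q_gt0 grq iKL.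
have ln_g x : ln (g x) = ln (q x) - ln (r x).
  have g_gt0 : 0 < g x by rewrite -(pmulr_lgt0 _ (r_gt0 x)) grq.
  by rewrite -grq lnM ?posrE // addrK.
rewrite /KL -integralD_EFin_integrable_l //.
  apply: eq_integral => x _; rewrite ln_g !ln_div ?posrE //; congr EFin; ring.
rewrite (_ : (fun x => _) = (fun x => - (ln (q x) - ln (r x)) * p x)).
  apply: measurable_funM => //; apply: measurable_funN; apply: measurable_funB;
  by apply: measurableT_comp => //; exact: measurable_ln.
by apply/funext => x; rewrite ln_g.
Qed.

Lemma is_minimizer_shift (R : realType) (k : nat) (J1 J2 : param R k -> \bar R)
    (C1 C2 : param R k -> Prop) (c : R) :
  (forall th, C1 th <-> C2 th) -> (forall th, J1 th = (c%:E + J2 th)%E) ->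
  forall th, is_minimizer J1 C1 th <-> is_minimizer J2 C2 th.
Proof.
move=> C12 J12 th; rewrite /is_minimizer C12.
split=> -[Cth min]; split=> // th' /C12 Cth'; have := min th' Cth';
  by rewrite !J12 leeD2lE.
Qed.

Lemma wt_gt0 (R : realType) (k : nat) (th : param R k) y t : 0 < wt th y t.
Proof. by case: y; exact: expR_gt0. Qed.

Section missing_data_model.
Variables (R : realType) (d k : nat).
Variable mu : {measure set (d.-tuple R) -> \bar R}.
Variables (pi : bool -> bool -> R) (f : bool -> bool -> d.-tuple R -> R).
Variable T : d.-tuple R -> k.-tuple R.
Hypothesis pi_gt0 : forall y r, 0 < pi y r.
Hypothesis f_gt0 : forall y r x, 0 < f y r x.
Hypothesis mf : forall y r, measurable_fun setT (f y r).
Hypothesis mT : measurable_fun setT T.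
Implicit Type th : param R k.

Lemma pXY_gt0 y r x : 0 < pXY pi f y r x.
Proof. by rewrite mulr_gt0 // divr_gt0 // addr_gt0. Qed.

Lemma pX_gt0 r x : 0 < pX pi f r x.
Proof. by rewrite addr_gt0 // pXY_gt0. Qed.

Lemma qtheta_gt0 th x : 0 < qtheta pi f T th x.
Proof. by rewrite addr_gt0 // mulr_gt0 // (wt_gt0, pXY_gt0). Qed.

Lemma gtheta_mul_pX th x :
  gtheta pi f T th x * pX pi f true x = qtheta pi f T th x.
Proof.
have := pX_gt0 true x; rewrite /gtheta /eta1 /qtheta /pX => /lt0r_neq0 ?.
by field.
Qed.

Lemma measurable_pXY y r : measurable_fun setT (pXY pi f y r).
Proof. exact: measurable_funM. Qed.

Lemma measurable_pX r : measurable_fun setT (pX pi f r).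
Proof. by apply: measurable_funD; exact: measurable_pXY. Qed.

Lemma measurable_wt th y : measurable_fun setT (fun x => wt th y (T x)).
Proof.
rewrite /wt; case: y; (apply: measurableT_comp; first exact: measurable_expR);
  apply: measurable_funD => //; apply: measurable_sum => i;
  apply: measurable_funM => //; exact: measurableT_comp (measurable_tnth i) mT.
Qed.

Lemma measurable_qtheta th : measurable_fun setT (qtheta pi f T th).
Proof.
by apply: measurable_funD; apply: measurable_funM;
  (exact: measurable_wt || exact: measurable_pXY).
Qed.

Hypothesis f_int1 : forall y r, (\int[mu]_x (f y r x)%:E)%E = 1%:E.

Lemma integral_pX r : (\int[mu]_x (pX pi f r x)%:E)%E = 1%:E.
Proof.
have w_ge0 y : 0 <= pi y r / (pi false r + pi true r).
  by rewrite ltW // divr_gt0 // addr_gt0.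
have int_pXY y : (\int[mu]_x (pXY pi f y r x)%:E)%E =
                 (pi y r / (pi false r + pi true r))%:E.
  under eq_integral do rewrite EFinM.
  rewrite ge0_integralZr ?f_int1 ?mul1e ?lee_fin //.
  - exact/measurable_EFinP.
  - by move=> x _; rewrite lee_fin ltW.
rewrite /pX; under eq_integral do rewrite EFinD.
rewrite ge0_integralD //.
- by rewrite !int_pXY -EFinD -mulrDl addrC divff // gt_eqF // addr_gt0.
all: by [move=> x _; rewrite lee_fin ltW // pXY_gt0
        |apply/measurable_EFinP; exact: measurable_pXY].
Qed.

Lemma feasible1E th : feasible1 mu pi f T th <-> feasible2 mu pi f T th.
Proof.
rewrite /feasible1 /feasible2 /condE.
by under eq_integral do rewrite -gtheta_mul_pX.
Qed.

Lemma risk1E th :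
  mu.-integrable setT (EFin \o
    (fun x => pX pi f false x * ln (pX pi f false x / pX pi f true x))) ->
  risk1 mu pi f T th =
  (KL mu (pX pi f false) (pX pi f true) + risk2 mu pi f T th)%E.
Proof.
move=> iKL; apply: KL_factor => //; [exact: measurable_pX|exact: measurable_pX|
  exact: measurable_qtheta|exact: pX_gt0|exact: pX_gt0|exact: qtheta_gt0|].
exact: gtheta_mul_pX.
Qed.

End missing_data_model.

Theorem lemma9 (R : realType) (d k : nat)
  (mu : {measure set (d.-tuple R) -> \bar R})
  (pi : bool -> bool -> R) (f : bool -> bool -> d.-tuple R -> R)
  (T : d.-tuple R -> k.-tuple R) :
  is_lebesgue_measure mu ->
  (forall y r, 0 < pi y r) ->
  pi false false + pi false true + pi true false + pi true true = 1 ->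
  (forall y r, measurable_fun setT (f y r)) ->
  (forall y r x, 0 < f y r x) ->
  (forall y r, (\int[mu]_x (f y r x)%:E)%E = 1%:E) ->
  measurable_fun setT T ->
  (KL mu (pX pi f false) (pX pi f true) < +oo)%E ->
  (forall th : param R k, feasible1 mu pi f T th <-> feasible2 mu pi f T th) /\
  (exists C : R, forall th : param R k, feasible1 mu pi f T th ->
      risk1 mu pi f T th = (C%:E + risk2 mu pi f T th)%E) /\
  (forall th : param R k,
      is_minimizer (risk1 mu pi f T) (feasible1 mu pi f T) th <->
      is_minimizer (risk2 mu pi f T) (feasible2 mu pi f T) th).
Proof.
move=> _ pi_gt0 _ mf f_gt0 f_int1 mT KL_lty.
set KL01 := KL mu (pX pi f false) (pX pi f true).
have iKL : mu.-integrable setT (EFin \o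
    (fun x => pX pi f false x * ln (pX pi f false x / pX pi f true x))).
  apply: integrable_KL_integrand => //;
    try exact: measurable_pX; try exact: pX_gt0.
  by rewrite integral_pX // ltry.
have KL01_fin : KL01 \is a fin_num by exact: integrable_fin_num iKL.
have risk_shift th :
    risk1 mu pi f T th = ((fine KL01)%:E + risk2 mu pi f T th)%E.
  by rewrite fineK // risk1E.
have feasibleE th : feasible1 mu pi f T th <-> feasible2 mu pi f T th.
  exact: feasible1E.
split; first exact: feasibleE.
split; first by exists (fine KL01) => th _; exact: risk_shift.
exact: is_minimizer_shift feasibleE risk_shift.
Qed.
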